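(* Let $\mathcal N=(\mathcal L,\mathcal I,D_{\mathcal L})$ be a network and let $R\in\mathcal R^{\mathcal N}$. Then for every $\epsilon>0$ there exists a collision-free schedule $S$ that has some period $T_p\ge 1$, whose rate vector $R_S$ exists, and which satisfies $R_S\succcurlyeq R-\epsilon$.
   Context: A network is a triple $\mathcal N=(\mathcal L,\mathcal I,D_{\mathcal L})$ where $\mathcal L$ is a finite nonempty set (of links); $\mathcal I=(\mathcal I(l))_{l\in\mathcal L}$ is the collision profile, each $\mathcal I(l)$ being a collection of nonempty subsets of $\mathcal L$; and $D_{\mathcal L}$ (the link-wise delay matrix) assigns an integer $D_{\mathcal L}(l,l')$ to every pair $(l,l')$ with $l'\in\phi$ for some $\phi\in\mathcal I(l)$. The character of $\mathcal N$ is $D^*=\max_{l\in\mathcal L}\max_{\phi\in\mathcal I(l)}\max_{l'\in\phi}|D_{\mathcal L}(l,l')|$ (taken to be $0$ if there are no collision sets). A schedule is a map $S:\mathcal L\times\mathbb Z\to\{0,1\}$. For $(l,t)\in\mathcal L\times\mathbb Z$, $S(l,t)$ has a collision if there exists $\phi\in\mathcal I(l)$ such that $S(l',t+D_{\mathcal L}(l,l'))=1$ for every $l'\in\phi$; otherwise $S(l,t)$ is collision free. $S$ is collision free if $S(l,t)$ is collision free for every $(l,t)$ with $S(l,t)=1$. $S$ has period $T_p\ge 1$ if $S(l,t)=S(l,t+T_p)$ for all $(l,t)$. For a schedule $S$ and link $l$, $R_S(l)=\lim_{T\to\infty}\frac1T\sum_{t=0}^{T-1}\iota\big(S(l,t)=1\text{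 and }S(l,t)\text{ is collision free}\big)$ when the limit exists ($\iota$ is the indicator); if it exists for all $l$, $R_S=(R_S(l))_{l\in\mathcal L}$ is the rate vector of $S$. Vectors/matrices are compared entrywise ($A\preccurlyeq B$ iff each entry of $A$ is at most the corresponding entry of $B$), and $R-\epsilon$ means subtracting $\epsilon$ from every entry. A nonnegative vector $R\in[0,\infty)^{\mathcal L}$ is achievable if for every $\epsilon>0$ there is a schedule $S$ whose rate vector exists and satisfies $R_S\succcurlyeq R-\epsilon$; the rate region $\mathcal R^{\mathcal N}$ is the set of all achievable nonnegative vectors. *)

From mathcomp Require Import ssreflect ssrbool eqtype fintype finset.
From Stdlib Require Import ZArith Reals.

Set Implicit Arguments.
Unset Strict Implicit.
Unset Printing Implicit Defensive.

(* A network over the finite link type L: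
   - I : L -> {set {set L}} is the collision profile (I l = collection of collision sets of l),
   - D : L -> L -> Z is the link-wise delay matrix (only its values D l l' with
     l' in some phi \in I l are ever used). *)

Definition network_wf (L : finType) (I : L -> {set {set L}}) : Prop :=
  (0 < #|L|)%nat /\ (forall (l : L) (phi : {set L}), phi \in I l -> phi != set0).

Definition schedule (L : finType) := L -> Z -> bool.

Definition has_collision (L : finType) (I : L -> {set {set L}}) (D : L -> L -> Z)
    (S : schedule L) (l : L) (t : Z) : bool :=
  [exists phi in I l, [forall l' in phi, S l' (t + D l l')%Z]].

Definition collision_free (L : finType) (I : L -> {set {set L}}) (D : L -> L -> Z)
    (S : schedule L) : Prop :=
  forall (l : L) (t : Z), S l t = true -> has_collision I D S l t = false.

Definition has_period (L : finType) (S : schedule L) (Tp : nat) : Prop :=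
  (1 <= Tp)%nat /\ forall (l : L) (t : Z), S l t = S l (t + Z.of_nat Tp)%Z.

Fixpoint success_count (L : finType) (I : L -> {set {set L}}) (D : L -> L -> Z)
    (Sch : schedule L) (l : L) (T : nat) : nat :=
  match T with
  | O => O
  | Datatypes.S n => (success_count I D Sch l n +
             (if Sch l (Z.of_nat n) && ~~ has_collision I D Sch l (Z.of_nat n) then 1 else 0))%nat
  end.

(* (1/T) * sum_{t=0}^{T-1} indicator; the T = 0 term is irrelevant for the limit. *)
Definition avg_rate (L : finType) (I : L -> {set {set L}}) (D : L -> L -> Z)
    (S : schedule L) (l : L) (T : nat) : R :=
  (INR (success_count I D S l T) / INR T)%R.

Definition is_rate_vector (L : finType) (I : L -> {set {set L}}) (D : L -> L -> Z)
    (S : schedule L) (r : L -> R) : Prop :=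
  forall l : L, Un_cv (avg_rate I D S l) (r l).

Definition achievable (L : finType) (I : L -> {set {set L}}) (D : L -> L -> Z)
    (Rv : L -> R) : Prop :=
  forall eps : R, (0 < eps)%R ->
    exists (S : schedule L) (r : L -> R),
      is_rate_vector I D S r /\ forall l : L, (Rv l - eps <= r l)%R.

Definition in_rate_region (L : finType) (I : L -> {set {set L}}) (D : L -> L -> Z)
    (Rv : L -> R) : Prop :=
  (forall l : L, (0 <= Rv l)%R) /\ achievable I D Rv.

From mathcomp Require Import ssreflect ssrbool ssrfun eqtype ssrnat seq div fintype finset bigop.
From mathcomp Require Import zify.
From Stdlib Require Import ZArith Reals Lra Lia Psatz.

Set Implicit Arguments.
Unset Strict Implicit.

(* Given an achievable R and eps > 0, take a schedule S0 whose rate vector is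
   within eps/2 of R, a uniform bound K on the absolute delays, and a window
   length T so large that, for every link, the empirical success rate of S0
   on [0, T) is within eps/4 of its limit and K/T <= eps/4.  The schedule
   [guarded_replay] of period T + K replays, in each period, the successful
   slots of S0 in [0, T) and then stays silent for K guard slots.  Since all
   delays are at most K, any collision of the replay would be a collision of
   S0 inside [0, T), so the replay is collision free; its rate is the number of
   successes of S0 in [0, T) divided by T + K, hence at least R - eps. *)

Lemma count_iota_add (f : pred nat) (a b : nat) :
  count f (iota 0 (a + b)) = count f (iota 0 a) + count (fun t => f (a + t)) (iota 0 b).
Proof. by rewrite iotaD count_cat add0n -[in iota a b](addn0 a) iotaDl count_map. Qed.

Lemma count_periodic (f : pred nat) (p : nat) : (forall t, f (t + p) = f t) ->
  forall q m, count f (iota 0 (q * p + m)) = q * count f (iota 0 p) + count f (iota 0 m).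
Proof.
move=> f_per; elim=> [|q IHq] m //.
rewrite mulSn -addnA count_iota_add (@eq_count _ _ f) ?IHq ?addnA //.
by move=> t /=; rewrite addnC f_per.
Qed.

Lemma periodic_count_deviation (f : pred nat) (p : nat) :
  (0 < p)%nat -> (forall t, f (t + p) = f t) -> forall n : nat,
  (Rabs (INR (count f (iota 0 n)) * INR p - INR n * INR (count f (iota 0 p)))
     <= INR p * INR p)%R.
Proof.
move=> p_pos f_per n.
have n_split : n = n %/ p * p + n %% p by rewrite -divn_eq.
have m_lt_p : n %% p < p by rewrite ltn_mod.
have cnt_n := count_periodic f_per (n %/ p) (n %% p).
rewrite -n_split in cnt_n.
have cnt_m := count_size f (iota 0 (n %% p)).
have cnt_p := count_size f (iota 0 p).
rewrite size_iota in cnt_m; rewrite size_iota in cnt_p.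
move: cnt_n cnt_m cnt_p n_split m_lt_p.
set a := count f (iota 0 n); set c := count f (iota 0 p).
set cm := count f (iota 0 (n %% p)); set q := n %/ p; set m := n %% p.
move=> cnt_n cnt_m cnt_p n_split m_lt_p.
have up : (a * p <= n * c + p * p)%nat by rewrite cnt_n n_split; nia.
have low : (n * c <= a * p + p * p)%nat by rewrite cnt_n n_split; nia.
move/leP/le_INR: up; move/leP/le_INR: low; rewrite !plus_INR !mult_INR => low up.
by apply: Rabs_le; lra.
Qed.

Lemma bounded_deviation_ratio_cv (a : nat -> R) (c p : R) : (0 < p)%R ->
  (forall n, Rabs (a n * p - INR n * c) <= p * p)%R ->
  Un_cv (fun n => a n / INR n)%R (c / p)%R.
Proof.
move=> p_pos dev e e_pos.
have [N N_large] := INR_unbounded (p / e).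
exists N.+1 => n n_ge; rewrite /R_dist.
have n_pos : (0 < INR n)%R by apply: lt_0_INR; lia.
have e_n : (p < e * INR n)%R.
  have : (INR N <= INR n)%R by apply: le_INR; lia.
  have : (p / e * e = p)%R by field; lra.
  nra.
have -> : (a n / INR n - c / p = (a n * p - INR n * c) / (INR n * p))%R by field; lra.
rewrite /Rdiv Rabs_mult Rabs_inv (Rabs_pos_eq (INR n * p)); last by nra.
apply: (Rmult_lt_reg_r (INR n * p)); first by nra.
rewrite Rmult_assoc Rinv_l; last by nra.
have := dev n; nra.
Qed.

Definition success (L : finType) (I : L -> {set {set L}}) (D : L -> L -> Z)
    (S : schedule L) (l : L) (t : Z) : bool :=
  S l t && ~~ has_collision I D S l t.

Lemma success_countE (L : finType) (I : L -> {set {set L}}) (D : L -> L -> Z)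
    (S : schedule L) (l : L) (n : nat) :
  success_count I D S l n = count (fun t => success I D S l (Z.of_nat t)) (iota 0 n).
Proof.
elim: n => [|n IHn] //.
by rewrite [LHS]/= IHn -[in iota 0 n.+1]addn1 iotaD count_cat /= addn0.
Qed.

Lemma collision_free_success_count (L : finType) (I : L -> {set {set L}})
    (D : L -> L -> Z) (S : schedule L) (l : L) (n : nat) :
  collision_free I D S ->
  success_count I D S l n = count (fun t => S l (Z.of_nat t)) (iota 0 n).
Proof.
move=> cf; rewrite success_countE; apply: eq_count => t /=.
by rewrite /success; case sent: (S l _) => //=; rewrite cf.
Qed.

Lemma periodic_rate (L : finType) (I : L -> {set {set L}}) (D : L -> L -> Z)
    (S : schedule L) (Tp : nat) :
  collision_free I D S -> has_period S Tp ->
  is_rate_vector I D S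
    (fun l => INR (count (fun t => S l (Z.of_nat t)) (iota 0 Tp)) / INR Tp)%R.
Proof.
move=> cf [Tp_pos S_per] l e e_pos.
have f_per : forall t, S l (Z.of_nat (t + Tp)) = S l (Z.of_nat t).
  by move=> t; rewrite Nat2Z.inj_add -S_per.
have Tp_gt0 : 0 < Tp by lia.
have Tp_posR : (0 < INR Tp)%R by apply: lt_0_INR; lia.
have [N N_cv] := bounded_deviation_ratio_cv Tp_posR
  (periodic_count_deviation Tp_gt0 f_per) e_pos.
by exists N => n n_ge; rewrite /avg_rate collision_free_success_count //; apply: N_cv.
Qed.

(* Two instants at distance |d| <= K whose residues modulo T + K both fall in
   the first T slots lie in the same period, so their residues differ by d. *)
Lemma mod_shift_in_window (T K t d : Z) :
  (0 < T)%Z -> (0 <= K)%Z -> (Z.abs d <= K)%Z ->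
  (t mod (T + K) < T)%Z -> ((t + d) mod (T + K) < T)%Z ->
  ((t + d) mod (T + K) = t mod (T + K) + d)%Z.
Proof.
move=> T_pos K_nneg d_le t_in td_in.
have P_pos : (0 < T + K)%Z by lia.
have t_div := Z.div_mod t (T + K) ltac:(lia).
have td_div := Z.div_mod (t + d) (T + K) ltac:(lia).
have t_bnd := Z.mod_pos_bound t (T + K) P_pos.
have td_bnd := Z.mod_pos_bound (t + d) (T + K) P_pos.
move: t_div td_div t_bnd td_bnd t_in td_in.
set r := (t mod _)%Z; set r' := ((t + d) mod _)%Z.
set q := (t / _)%Z; set q' := ((t + d) / _)%Z.
move=> t_div td_div t_bnd td_bnd t_in td_in.
have same_period : q' = q by nia.
lia.
Qed.

Section GuardedReplay.

Variables (L : finType) (I : L -> {set {set L}}) (D : L -> L -> Z).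
Variables (S0 : schedule L) (T K : nat).
Hypothesis T_pos : 0 < T.
Hypothesis delay_bound : forall l l' : L, (Z.abs (D l l') <= Z.of_nat K)%Z.

Definition guarded_replay : schedule L := fun l t =>
  let s := (t mod (Z.of_nat T + Z.of_nat K))%Z in
  (s <? Z.of_nat T)%Z && success I D S0 l s.

Lemma guarded_replay_periodic : has_period guarded_replay (T + K).
Proof.
split; first by lia.
move=> l t; rewrite /guarded_replay /= Nat2Z.inj_add.
by rewrite -[in (t + _)%Z](Z.mul_1_l (Z.of_nat T + Z.of_nat K)) Z_mod_plus_full.
Qed.

(* A collision of the replay would, thanks to the guard interval, be a
   collision of S0 at the corresponding instant of [0, T). *)
Lemma guarded_replay_collision_free : collision_free I D guarded_replay.
Proof.
move=> l t /andP [/Z.ltb_lt t_in /andP [_ /negP no_coll0]].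
apply/negbTE/existsP => -[phi /andP [phi_in /forallP all_sent]].
apply: no_coll0; apply/existsP; exists phi; rewrite phi_in /=.
apply/forallP => l'; apply/implyP => l'_in.
move: (implyP (all_sent l') l'_in) => /andP [/Z.ltb_lt td_in /andP [sent' _]].
by rewrite -mod_shift_in_window //; lia.
Qed.

Lemma guarded_replay_period_count (l : L) :
  count (fun t => guarded_replay l (Z.of_nat t)) (iota 0 (T + K))
  = success_count I D S0 l T.
Proof.
have small t : t < T + K ->
    (Z.of_nat t mod (Z.of_nat T + Z.of_nat K) = Z.of_nat t)%Z.
  by move=> t_lt; apply: Z.mod_small; lia.
rewrite count_iota_add success_countE (@eq_in_count _ _ pred0 (iota 0 K)).
- rewrite count_pred0 addn0; apply: eq_in_count => t; rewrite mem_iota => t_lt.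
  by rewrite /guarded_replay small; [rewrite (proj2 (Z.ltb_lt _ _)) //; lia | lia].
- move=> t; rewrite mem_iota => t_lt.
  by rewrite /guarded_replay small; [rewrite (proj2 (Z.ltb_ge _ _)) //; lia | lia].
Qed.

Lemma guarded_replay_rate :
  is_rate_vector I D guarded_replay
    (fun l => INR (success_count I D S0 l T) / INR (T + K))%R.
Proof.
move=> l; rewrite -guarded_replay_period_count.
exact: periodic_rate guarded_replay_collision_free guarded_replay_periodic l.
Qed.

End GuardedReplay.

Lemma delay_bound_exists (L : finType) (D : L -> L -> Z) :
  exists K : nat, forall l l' : L, (Z.abs (D l l') <= Z.of_nat K)%Z.
Proof.
exists (\max_(p : L * L) Z.abs_nat (D p.1 p.2)) => l l'.
rewrite -Zabs2Nat.id_abs; apply: inj_le; apply/leP.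
exact: (@leq_bigmax _ (fun p : L * L => Z.abs_nat (D p.1 p.2)) (l, l')).
Qed.

Lemma eventually_uniform (L : finType) (P : L -> nat -> Prop) :
  (forall l, exists N, forall n, (n >= N)%coq_nat -> P l n) ->
  exists N, forall l n, (n >= N)%coq_nat -> P l n.
Proof.
move=> ev.
suff [N HN] : exists N, forall l, l \in enum L -> forall n, (n >= N)%coq_nat -> P l n.
  by exists N => l n; apply: HN; rewrite mem_enum.
elim: (enum L) => [|x s [N HN]]; first by exists 0.
have [Nx HNx] := ev x; exists (N + Nx) => l.
rewrite inE => /orP [/eqP -> | l_in] n n_ge; [apply: HNx | apply: HN] => //; lia.
Qed.

Lemma guard_interval_loss (x eps c T K : R) :
  (0 < T)%R -> (0 <= K)%R -> (0 <= c <= T)%R -> (4 * K <= eps * T)%R ->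
  (x - 3 * eps / 4 <= c / T)%R -> (x - eps <= c / (T + K))%R.
Proof.
move=> T_pos K_nneg c_bnd guard_small rate_T.
have count_T : ((x - 3 * eps / 4) * T <= c)%R.
  have := Rmult_le_compat_r T _ _ (Rlt_le _ _ T_pos) rate_T.
  by have -> : (c / T * T = c)%R by field; lra.
apply: (Rmult_le_reg_r (T + K)); first lra.
have -> : (c / (T + K) * (T + K) = c)%R by field; lra.
case: (Rle_lt_dec (x - eps) 0) => sign; nra.
Qed.

Theorem theorem1 (L : finType) (I : L -> {set {set L}}) (D : L -> L -> Z)
    (Hwf : network_wf I) (Rv : L -> R) (HR : in_rate_region I D Rv) :
  forall eps : R, (0 < eps)%R ->
    exists (S : schedule L) (Tp : nat) (r : L -> R),
      collision_free I D S /\ has_period S Tp /\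
      is_rate_vector I D S r /\ (forall l : L, (Rv l - eps <= r l)%R).
Proof.
move=> eps eps_pos.
have [S0 [r0 [S0_rate r0_ge]]] := proj2 HR (eps / 2)%R ltac:(lra).
have [K delay_bound] := delay_bound_exists D.
have [N window_ok] :=
  @eventually_uniform L (fun l n => r0 l - eps / 4 <= avg_rate I D S0 l n)%R
    ltac:(move=> l; have [N HN] := S0_rate l (eps / 4)%R ltac:(lra);
          by exists N => n /HN /Rabs_def2; lra).
have [M M_large] := INR_unbounded (4 * INR K / eps).
have [T [T_pos T_ge_N T_ge_M]] : exists T, [/\ 0 < T, N <= T & M <= T].
  by exists (N + M).+1; split; lia.
exists (guarded_replay I D S0 T K), (T + K),
  (fun l => INR (success_count I D S0 l T) / INR (T + K))%R.
split; first exact: guarded_replay_collision_free.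
split; first exact: guarded_replay_periodic.
split; first exact: guarded_replay_rate.
have guard_small : (4 * INR K <= eps * INR T)%R.
  have M_le_T : (INR M <= INR T)%R by apply: le_INR; lia.
  have := Rmult_lt_compat_l eps _ _ eps_pos M_large.
  have -> : (eps * (4 * INR K / eps) = 4 * INR K)%R by field; lra.
  by have := Rmult_le_compat_l eps _ _ (Rlt_le _ _ eps_pos) M_le_T; lra.
move=> l; rewrite plus_INR; apply: guard_interval_loss => //.
- by apply: lt_0_INR; lia.
- exact: pos_INR.
- split; first exact: pos_INR.
  by apply: le_INR; apply/leP; rewrite success_countE -{2}(size_iota 0 T) count_size.
- have := window_ok l T ltac:(lia); have := r0_ge l; rewrite /avg_rate; lra.
Qed.
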